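(* Let $C>0$, $\epsilon>0$, positive integers $s\le N$ and $K$ be fixed, let $L=\frac{4}{3}s\ln\left(\frac{eN}{s}\right)+\frac{14}{3}s+\frac{4}{3}\ln\frac{2}{\epsilon}$, and define $$\beta_{\mathrm{serial}}(p,\delta,K)=\left[\ln\frac{1-pe^{-C\delta^2}}{1-p+p(1-e^{-C\delta^2})(pe^{-C\delta^2})^K}\right]^{-1}L,\quad \beta_{\mathrm{star}}(p,\delta)=\left[\ln\frac{1}{1-p+pe^{-C\delta^2}}\right]^{-1}L,\quad \beta(\delta)=\frac{L}{C\delta^2}.$$ Then (i) for all $p\in[0,1]$ and $\delta\in(0,1)$, $\beta_{\mathrm{serial}}(p,\delta,K)\ge\beta_{\mathrm{star}}(p,\sqrt{K}\delta)\ge\beta(\sqrt{K}\delta)/p$; (ii) for fixed $\delta\in(0,1)$ and $K$, $\beta_{\mathrm{serial}}(p,\delta,K)$ is a strictly decreasing function of $p\in[0,1]$.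
   Context: Conventions: $1/0=+\infty$, so these quantities equal $+\infty$ at $p=0$. *)

(* R : realType, extended reals \bar R for 1/0 = +oo. *)
From mathcomp Require Import all_boot all_order all_algebra.
From mathcomp Require Import all_classical all_reals all_analysis.
Set Implicit Arguments. Unset Strict Implicit. Unset Printing Implicit Defensive.
Import Order.TTheory GRing.Theory Num.Theory.
Local Open Scope ring_scope.

Section Defs.
Variable R : realType.

Definition einv (x : R) : \bar R := if x == 0 then +oo%E else (x^-1)%:E.

Definition Lconst (eps : R) (s N : nat) : R :=
  4/3 * s%:R * ln (expR 1 * N%:R / s%:R) + 14/3 * s%:R + 4/3 * ln (2 / eps).

Definition beta_serial (C L p d : R) (K : nat) : \bar R :=
  let q := expR (- (C * d ^+ 2)) in
  (einv (ln ((1 - p * q) / (1 - p + p * (1 - q) * (p * q) ^+ K))) * L%:E)%E.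

Definition beta_star (C L p d : R) : \bar R :=
  (einv (ln (1 / (1 - p + p * expR (- (C * d ^+ 2))))) * L%:E)%E.

Definition beta (C L d : R) : R := L / (C * d ^+ 2).

End Defs.

From mathcomp Require Import all_boot all_order all_algebra.
From mathcomp Require Import all_classical all_reals all_analysis.
From mathcomp Require Import ring lra.
Set Implicit Arguments. Unset Strict Implicit.
Import Order.TTheory GRing.Theory Num.Theory.
Local Open Scope ring_scope.

(* Write q = e^{-C delta^2}, so that e^{-C (sqrt K delta)^2} = q^K, and let
   G(u) = 1 + u + ... + u^(K-1).  Since 1 - u^K = (1 - u) G(u), the argument of
   the logarithm in beta_serial is 1 / (1 - p (1 - q) G(p q)), and the one in
   beta_star(p, sqrt K delta) is 1 / (1 - p (1 - q) G(q)).  Both claims about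
   beta_serial thus reduce to the monotonicity of p |-> p G(p q) and of G.  The
   bound beta_star >= beta / p is the convexity of exp:
   e^{-p x} <= 1 - p + p e^{-x}. *)

Section Reciprocal.
Variable R : realType.
Implicit Types x y L : R.

Lemma einv_le x y : 0 <= y -> y <= x -> (einv x <= einv y)%E.
Proof.
move=> y0 yx; rewrite /einv.
have [_|yn0] := eqVneq y 0; first by rewrite leey.
have y0' : 0 < y by rewrite lt0r yn0.
by rewrite gt_eqF ?(lt_le_trans y0') // lee_fin lef_pV2 ?posrE ?(lt_le_trans y0').
Qed.

Lemma einv_lt x y : 0 <= y -> y < x -> (einv x < einv y)%E.
Proof.
move=> y0 yx; have x0 : 0 < x by exact: le_lt_trans yx.
rewrite /einv gt_eqF //.
have [_|yn0] := eqVneq y 0; first by rewrite ltry.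
by rewrite lte_fin ltf_pV2 ?posrE // lt0r yn0.
Qed.

Lemma einv_lnV_mulr_le L x y : 0 < L -> 0 < y -> y <= x -> x <= 1 ->
  (einv (ln y^-1) * L%:E <= einv (ln x^-1) * L%:E)%E.
Proof.
move=> L0 y0 yx x1; have x0 := lt_le_trans y0 yx.
rewrite lee_pmul2r ?lte_fin //; apply: einv_le.
  by rewrite ln_ge0 // invf_ge1.
by rewrite ler_ln ?posrE ?invr_gt0 // lef_pV2 ?posrE.
Qed.

Lemma einv_lnV_mulr_lt L x y : 0 < L -> 0 < y -> y < x -> x <= 1 ->
  (einv (ln y^-1) * L%:E < einv (ln x^-1) * L%:E)%E.
Proof.
move=> L0 y0 yx x1; have x0 := lt_trans y0 yx.
rewrite lte_pmul2r ?lte_fin //; apply: einv_lt.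
  by rewrite ln_ge0 // invf_ge1.
by rewrite ltr_ln ?posrE ?invr_gt0 // ltf_pV2 ?posrE.
Qed.

Lemma EFin_div_mul_einv L x p : 0 < L -> 0 < x ->
  ((L / x)%:E * einv p = einv (p * x) * L%:E)%E.
Proof.
move=> L0 x0; rewrite /einv mulf_eq0 (gt_eqF x0) orbF.
have [_|pn0] := eqVneq p 0; last by rewrite -EFinM invfM; congr (_%:E); ring.
by rewrite gt0_mulye ?gt0_muley ?lte_fin ?divr_gt0.
Qed.

End Reciprocal.

Section GeometricSum.
Variable R : realType.
Implicit Types u v : R.

Definition geom_sum (K : nat) u : R := \sum_(i < K) u ^+ i.

Lemma subr1X_geom_sum K u : 1 - u ^+ K = (1 - u) * geom_sum K u.
Proof. by rewrite /geom_sum -[LHS]opprB subrX1 -mulNr opprB. Qed.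

Lemma geom_sum_le K u v : 0 <= u -> u <= v -> geom_sum K u <= geom_sum K v.
Proof.
move=> u0 uv; apply: ler_sum => i _.
by rewrite lerXn2r // nnegrE (le_trans u0).
Qed.

Lemma geom_sum_ge1 K u : (0 < K)%N -> 0 <= u -> 1 <= geom_sum K u.
Proof.
case: K => // K _ u0; rewrite /geom_sum big_ord_recl expr0 lerDl.
by apply: sumr_ge0 => i _; apply: exprn_ge0.
Qed.

End GeometricSum.

Section SerialGap.
Variables (R : realType) (K : nat) (q : R).
Hypotheses (q_gt0 : 0 < q) (q_lt1 : q < 1).
Implicit Types p : R.

Definition serial_gap p : R := 1 - p * (1 - q) * geom_sum K (p * q).

Lemma star_denom_gt0 p : 0 <= p <= 1 -> 0 < 1 - p + p * q ^+ K.
Proof.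
move=> /andP[p0 p1].
have qK0 : 0 < q ^+ K by rewrite exprn_gt0.
have qK1 : q ^+ K <= 1 by rewrite exprn_ile1 // ltW.
nra.
Qed.

Lemma star_denom_le_serial_gap p : 0 <= p <= 1 ->
  1 - p + p * q ^+ K <= serial_gap p.
Proof.
move=> /andP[p0 p1].
have -> : 1 - p + p * q ^+ K = 1 - p * (1 - q) * geom_sum K q.
  by have := subr1X_geom_sum K q; rewrite -mulrA => <-; ring.
rewrite lerD2l lerN2 ler_wpM2l ?mulr_ge0 ?subr_ge0 ?(ltW q_lt1) //.
by rewrite geom_sum_le ?mulr_ge0 ?ler_piMl ?(ltW q_gt0).
Qed.

Lemma serial_gap_gt0 p : 0 <= p <= 1 -> 0 < serial_gap p.
Proof.
by move=> hp; exact: lt_le_trans (star_denom_gt0 hp) (star_denom_le_serial_gap hp).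
Qed.

Lemma serial_gap_le1 p : 0 <= p -> serial_gap p <= 1.
Proof.
move=> p0; rewrite gerBl mulr_ge0 ?mulr_ge0 ?subr_ge0 ?(ltW q_lt1) //.
by rewrite sumr_ge0 // => i _; rewrite exprn_ge0 ?mulr_ge0 ?(ltW q_gt0).
Qed.

Lemma serial_gap_decr p1 p2 : (0 < K)%N -> 0 <= p1 -> p1 < p2 ->
  serial_gap p2 < serial_gap p1.
Proof.
move=> K0 p10 p12; have p20 := le_lt_trans p10 p12.
rewrite ltrD2l ltrN2 -!mulrA [p1 * _]mulrCA [p2 * _]mulrCA.
rewrite ltr_pM2l ?subr_gt0 //.
have G2 : 0 < geom_sum K (p2 * q).
  by rewrite (lt_le_trans ltr01) ?geom_sum_ge1 ?mulr_ge0 ?(ltW p20) ?(ltW q_gt0).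
apply: le_lt_trans (_ : p1 * geom_sum K (p2 * q) < _); last by rewrite ltr_pM2r.
apply: ler_wpM2l => //; apply: geom_sum_le; first by rewrite mulr_ge0 // ltW.
by rewrite ler_pM2r // ltW.
Qed.

Lemma serial_ratioE p : p <= 1 ->
  (1 - p * q) / (1 - p + p * (1 - q) * (p * q) ^+ K) = (serial_gap p)^-1.
Proof.
move=> p1; have pq1 : p * q < 1.
  have [p0|p0] := lerP 0 p; last by rewrite (lt_trans _ ltr01) // nmulr_rlt0.
  by rewrite (le_lt_trans _ q_lt1) // ler_piMl // ltW.
have -> : 1 - p + p * (1 - q) * (p * q) ^+ K = (1 - p * q) * serial_gap p.
  have -> : (p * q) ^+ K = 1 - (1 - p * q) * geom_sum K (p * q).
    by rewrite -subr1X_geom_sum; ring.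
  by rewrite /serial_gap; ring.
by rewrite invfM mulrA mulfV ?mul1r // subr_eq0 eq_sym (lt_eqF pq1).
Qed.

End SerialGap.

Lemma lnV_mix_expR_le (R : realType) (p x : R) : 0 <= p <= 1 ->
  ln (1 - p + p * expR (- x))^-1 <= p * x.
Proof.
move=> /andP[p0 p1].
have D0 : 0 < 1 - p + p * expR (- x).
  by have := expR_gt0 (- x); nra.
rewrite lnV ?posrE // lerNl -[X in X <= _]expRK ler_ln ?posrE ?expR_gt0 //.
have := convex_expR (Itv01 p0 p1) (- x) 0; rewrite !convRE /=.
by rewrite mulr0 addr0 expR0 mulr1 mulrN addrC.
Qed.

Lemma beta_div_le_star (R : realType) (L x p : R) : 0 < L -> 0 < x ->
  0 <= p <= 1 ->
  ((L / x)%:E * einv p <= einv (ln (1 - p + p * expR (- x))^-1) * L%:E)%E.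
Proof.
move=> L0 x0 /andP[p0 p1]; rewrite EFin_div_mul_einv // lee_pmul2r ?lte_fin //.
apply: einv_le; last by rewrite lnV_mix_expR_le ?p0.
have ex0 := expR_gt0 (- x).
have ex1 : expR (- x) < 1 by rewrite expR_lt1 oppr_lt0.
by rewrite ln_ge0 // invf_ge1; nra.
Qed.

Lemma Lconst_gt0 (R : realType) (eps : R) (s N : nat) :
  0 < eps -> eps < 2 -> (0 < s)%N -> (s <= N)%N -> 0 < Lconst eps s N.
Proof.
move=> e0 e2 s0 sN; rewrite /Lconst.
have ln_eps : 0 < ln (2 / eps) by rewrite ln_gt0 // ltr_pdivlMr // mul1r.
have ln_N : 0 <= ln (expR 1 * N%:R / s%:R :> R).
  rewrite ln_ge0 // ler_pdivlMr ?ltr0n // mul1r.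
  apply: le_trans (_ : N%:R <= _); first by rewrite ler_nat.
  by rewrite ler_peMl ?ler0n // -expR0 ler_expR.
have s_pos : 0 < s%:R :> R by rewrite ltr0n.
nra.
Qed.

Theorem proposition4 (R : realType) (C eps : R) (s N K : nat) :
  0 < C -> 0 < eps -> eps < 1 -> (0 < s)%N -> (s <= N)%N -> (0 < K)%N ->
  let L := Lconst eps s N in
  (forall p delta : R, 0 <= p <= 1 -> 0 < delta < 1 ->
     (beta_star C L p (Num.sqrt K%:R * delta)
        <= beta_serial C L p delta K)%E /\
     ((beta C L (Num.sqrt K%:R * delta))%:E * einv p
        <= beta_star C L p (Num.sqrt K%:R * delta))%E) /\
  (forall delta : R, 0 < delta < 1 ->
     forall p1 p2 : R, 0 <= p1 -> p1 < p2 -> p2 <= 1 ->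
       (beta_serial C L p2 delta K < beta_serial C L p1 delta K)%E).
Proof.
move=> C0 e0 e1 s0 sN K0 L.
have L0 : 0 < L by rewrite Lconst_gt0 // (lt_trans e1) ?ltr1n.
have q01 d : 0 < d -> 0 < expR (- (C * d ^+ 2)) < 1.
  by move=> d0; rewrite expR_gt0 expR_lt1 oppr_lt0 mulr_gt0 ?exprn_gt0.
have expR_sqrtK d : expR (- (C * (Num.sqrt K%:R * d) ^+ 2))
                    = expR (- (C * d ^+ 2)) ^+ K.
  by rewrite exprMn sqr_sqrtr ?ler0n // -expRM_natl; congr expR; ring.
split=> [p d hp /andP[d0 _] | d /andP[d0 _] p1 p2 p10 p12 p21];
  have /andP[q0 q1] := q01 d d0; rewrite /beta_serial /beta_star /beta /=.
- case/andP: (hp) => p0 p1; split.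
  + rewrite (serial_ratioE K q0 q1 p1) expR_sqrtK div1r.
    apply: einv_lnV_mulr_le => //.
    * exact: star_denom_gt0.
    * exact: star_denom_le_serial_gap.
    * exact: serial_gap_le1.
  + rewrite div1r beta_div_le_star // mulr_gt0 // exprn_gt0 // mulr_gt0 //.
    by rewrite sqrtr_gt0 ltr0n.
- have p11 : p1 <= 1 by rewrite ltW // (lt_le_trans p12).
  rewrite (serial_ratioE K q0 q1 p11) (serial_ratioE K q0 q1 p21).
  apply: einv_lnV_mulr_lt => //.
  + by apply: serial_gap_gt0; rewrite // p21 (ltW (le_lt_trans p10 p12)).
  + exact: serial_gap_decr.
  + exact: serial_gap_le1.
Qed.
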